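(* Let $N\geq 2$ be an integer. For real $\theta$ and $\varepsilon\geq 0$ let $$G_\theta(\varepsilon)=(1+\theta)^N+\big(1-\theta(1+\varepsilon)\big)^N-2,$$ and define the critical uncertainty bound $\varepsilon_c(\theta)=\inf\{\varepsilon>0: G_\theta(\varepsilon)\leq 0\}$, with the convention $\inf\emptyset=+\infty$. Then for every $\theta>0$, $$\varepsilon_c(\theta)=\begin{cases}+\infty, & N\text{ even and }\theta>2^{1/N}-1,\\[3pt] \dfrac{1-\big(2-(1+\theta)^N\big)^{1/N}}{\theta}-1, & \text{otherwise.}\end{cases}$$
   Context: Root convention: for real $X>0$ and positive integer $N$, $X^{1/N}$ denotes the unique positive real $N$-th root; for $X<0$ and $N$ odd, $X^{1/N}=-|X|^{1/N}$; for $X=0$, $X^{1/N}=0$. (The case $X<0$ with $N$ even does not arise in the formula.) *)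

From HB Require Import structures.
From mathcomp Require Import all_boot all_order all_algebra.
From mathcomp Require Import all_classical all_reals all_analysis.
Set Implicit Arguments. Unset Strict Implicit. Unset Printing Implicit Defensive.
Import Order.TTheory GRing.Theory Num.Theory.
Local Open Scope ring_scope.

(* Real N-th root convention: positive root for X > 0, 0 for X = 0,
   -|X|^(1/N) for X < 0 (used only with N odd in the theorem). *)
Definition real_root {R : realType} (N : nat) (X : R) : R :=
  if 0 <= X then powR X (N%:R^-1) else - powR (- X) (N%:R^-1).

Definition G {R : realType} (N : nat) (theta eps : R) : R :=
  (1 + theta) ^+ N + (1 - theta * (1 + eps)) ^+ N - 2.

Definition eps_c {R : realType} (N : nat) (theta : R) : \bar R :=
  ereal_inf [set (e%:E) | e in [set e : R | 0 < e /\ G N theta e <= 0]].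

From HB Require Import structures.
From mathcomp Require Import all_boot all_order all_algebra.
From mathcomp Require Import all_classical all_reals all_analysis.
From mathcomp Require Import ring lra.
Import Order.TTheory GRing.Theory Num.Theory.
Local Open Scope ring_scope.

(* Write c = 2 - (1 + theta)^N and u = 1 - theta (1 + eps), a decreasing
   affine function of eps; then G_theta(eps) <= 0 iff u^N <= c.  For N even
   and c < 0 this never happens.  Otherwise r = c^(1/N) satisfies r^N = c, and
   u^N <= c forces u <= r, since x |-> x^N is strictly increasing on the reals
   (N odd) or on the nonnegative reals (where r lies when N is even).  Hence
   every admissible eps is at least the eps* with u = r, which is admissible
   itself; eps* > 0 because (1 + theta)^N + (1 - theta)^N > 2. *)

Section OddOrNonnegPowers.
Context {R : realDomainType} {N : nat} (N_gt0 : (0 < N)%N).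

Lemma ltrXn2r_odd_nneg (x y : R) :
  ssrnat.odd N || (0 <= x) -> x < y -> x ^+ N < y ^+ N.
Proof.
move=> x_dom lt_xy; have [x_ge0|x_lt0] := leP 0 x.
  by rewrite ltrXn2r // -lt0n.
have N_odd : ssrnat.odd N by rewrite leNgt x_lt0 orbF in x_dom.
have [y_ge0|y_lt0] := leP 0 y.
  by apply: (@lt_le_trans _ _ 0); rewrite ?exprn_odd_lt0 ?exprn_odd_ge0.
have exprN_odd z : (- z) ^+ N = - z ^+ N.
  by rewrite exprNn -signr_odd N_odd expr1 mulN1r.
by rewrite -ltrN2 -!exprN_odd ltrXn2r -?lt0n ?ltrN2 // oppr_ge0 ltW.
Qed.

Lemma lerXn2r_odd_nneg (x y : R) :
  ssrnat.odd N || (0 <= x) -> x <= y -> x ^+ N <= y ^+ N.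
Proof.
move=> x_dom; rewrite le_eqVlt => /predU1P[-> //|lt_xy].
exact/ltW/ltrXn2r_odd_nneg.
Qed.

End OddOrNonnegPowers.

Section RealRoot.
Context {R : realType} {N : nat} (N_gt0 : (0 < N)%N).

Lemma real_root_ge0 (x : R) : 0 <= x -> 0 <= real_root N x.
Proof. by move=> x_ge0; rewrite /real_root x_ge0 powR_ge0. Qed.

Lemma real_root_odd_nneg (x : R) :
  ssrnat.odd N || (0 <= x) -> ssrnat.odd N || (0 <= real_root N x).
Proof. by case/orP=> [->//|/real_root_ge0->]; rewrite orbT. Qed.

Lemma powR_invnK (x : R) : 0 <= x -> powR x N%:R^-1 ^+ N = x.
Proof.
move=> x_ge0; rewrite -powR_mulrn ?powR_ge0 // -powRrM mulVf ?powRr1 //.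
by rewrite pnatr_eq0 -lt0n.
Qed.

Lemma real_rootK (x : R) : ssrnat.odd N || (0 <= x) -> real_root N x ^+ N = x.
Proof.
rewrite /real_root; case: ifPn => [x_ge0 _|]; first exact: powR_invnK.
rewrite -ltNge orbC => x_lt0 /orP[//|N_odd].
by rewrite exprNn -signr_odd N_odd expr1 mulN1r powR_invnK ?opprK // oppr_ge0 ltW.
Qed.

Lemma real_root_ltE (a x : R) :
  0 <= a -> 0 <= x -> (real_root N a < x) = (a < x ^+ N).
Proof.
move=> a_ge0 x_ge0; rewrite -[in RHS](@real_rootK a) ?a_ge0 ?orbT //.
by rewrite ltr_pXn2r // nnegrE // real_root_ge0.
Qed.

Lemma le_real_root (c x : R) :
  ssrnat.odd N || (0 <= c) -> x ^+ N <= c -> x <= real_root N c.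
Proof.
move=> c_dom; apply: contra_leP => /negP; rewrite -ltNge => lt_root_x.
by rewrite -[c](real_rootK _ c_dom) ltrXn2r_odd_nneg // real_root_odd_nneg.
Qed.

Lemma real_root_lt (c x : R) :
  ssrnat.odd N || (0 <= c) -> ssrnat.odd N || (0 <= x) ->
  c < x ^+ N -> real_root N c < x.
Proof.
move=> c_dom x_dom; apply: contraLR; rewrite -!leNgt => le_x_root.
by rewrite -[c](real_rootK _ c_dom) lerXn2r_odd_nneg.
Qed.

End RealRoot.

Lemma exprD_exprB_gt2 {R : realDomainType} (N : nat) (t : R) :
  (1 < N)%N -> 0 < t -> 2 < (1 + t) ^+ N + (1 - t) ^+ N.
Proof.
move=> /subnK <- t_gt0; elim: (N - 2)%N => [|k IHk].
  by rewrite add0n !expr2; nra.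
have le_powB_powD : (1 - t) ^+ (k + 2) <= (1 + t) ^+ (k + 2).
  apply: le_trans (ler_norm _) _; rewrite normrX lerXn2r ?nnegrE ?normr_ge0 //.
  - lra.
  - by rewrite ler_norml; apply/andP; split; lra.
(* (1 + t) a + (1 - t) b = (a + b) + t (a - b) *)
rewrite addSn !exprS; move: IHk le_powB_powD.
set A := (1 + t) ^+ (k + 2); set B := (1 - t) ^+ (k + 2); nra.
Qed.

Lemma lt1_of_exprD_le2 {R : realDomainType} (N : nat) (t : R) :
  (1 < N)%N -> (1 + t) ^+ N <= 2 -> t < 1.
Proof.
move=> N_gt1; apply: contraLR; rewrite -leNgt -ltNge => t_ge1.
have two_le : 2 <= 1 + t by lra.
apply: (lt_le_trans _ (lerXn2r N _ _ two_le)); rewrite ?nnegrE; try lra.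
by rewrite -[X in X < _]expr1 ltr_eXn2l ?ltr1n.
Qed.

Lemma ereal_inf_min {R : realType} (S : set (\bar R)) (x : \bar R) :
  S x -> lbound S x -> ereal_inf S = x.
Proof.
by move=> Sx lbx; apply/eqP; rewrite eq_le ereal_inf_lbound // le_ereal_inf_tmp.
Qed.

Lemma G_le0E (R : realType) (N : nat) (theta e : R) :
  (G N theta e <= 0) = ((1 - theta * (1 + e)) ^+ N <= 2 - (1 + theta) ^+ N).
Proof. by rewrite /G subr_le0 addrC -lerBrDr. Qed.

Theorem lemma1 (R : realType) (N : nat) (hN : (2 <= N)%N) (theta : R)
  (htheta : 0 < theta) :
  eps_c N theta =
    (if ~~ ssrnat.odd N && (real_root N 2 - 1 < theta) then +oo%E
     else ((1 - real_root N (2 - (1 + theta) ^+ N)) / theta - 1)%:E).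
Proof.
have N_gt0 : (0 < N)%N by exact: ltnW.
set c := 2 - (1 + theta) ^+ N.
have -> : (real_root N 2 - 1 < theta) = (c < 0).
  by rewrite ltrBlDr addrC real_root_ltE // ?subr_lt0 //; lra.
rewrite /eps_c; case: ifPn => [/andP[N_even c_lt0] | c_dom].
  rewrite -ereal_inf0; congr ereal_inf; apply/seteqP; split => // x [e [_ +] _].
  by rewrite G_le0E -/c => /le_lt_trans/(_ c_lt0); rewrite exprn_even_lt0.
have {c_dom} c_dom : ssrnat.odd N || (0 <= c).
  by move: c_dom; rewrite negb_and negbK -leNgt.
set r := real_root N c.
have r_lt : r < 1 - theta.
  have one_sub_dom : ssrnat.odd N || (0 <= 1 - theta).
    case/orP: c_dom => [->//|c_ge0]; rewrite subr_ge0 ltW ?orbT //.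
    by apply: (lt1_of_exprD_le2 N theta hN); rewrite -subr_ge0.
  apply: real_root_lt => //; rewrite /c.
  by have := exprD_exprB_gt2 N theta hN htheta; lra.
have eps_gt0 : 0 < (1 - r) / theta - 1.
  by rewrite subr_gt0 ltr_pdivlMr // mul1r; lra.
apply: ereal_inf_min.
  exists ((1 - r) / theta - 1) => //; split => //.
  rewrite G_le0E.
  have -> : 1 - theta * (1 + ((1 - r) / theta - 1)) = r by field; rewrite gt_eqF.
  by rewrite real_rootK.
move=> _ [e [_ +] <-]; rewrite G_le0E -/c => /(le_real_root N_gt0 _ _ c_dom).
rewrite -/r => le_u_r; by rewrite lee_fin lerBlDr ler_pdivrMr //; lra.
Qed.
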